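(* Let $P\subseteq\mathbb{R}^n$ be a closed convex set, $c:\mathbb{R}^n\to\mathbb{R}$, $A\in\mathbb{R}^{I\times n}$ with rows $A_{i\bullet}$, $\eta\in\mathbb{R}^I$, scalars $\psi_{ij}$ ($i=0,\dots,I$, $j=1,\dots,J_i$) with $\psi_{ij}^\pm=\max(\pm\psi_{ij},0)$, and continuous functions $\phi_{ij},\varphi_{ij}:\mathbb{R}^n\to\mathbb{R}$. Let $\bar x\in P$. Then there exists $\bar\varepsilon>0$ (depending on $\bar x$) such that for every $\varepsilon\in(0,\bar\varepsilon]$: (A) if $\bar x$ is a local maximizer of the M-HSCOP (maximize $\theta_{\rm MHS}$ over $X_{\rm MHS}$), then $\bar x$ is a local maximizer of $(\mathrm{P}^\varepsilon_{\rm MHS})$ (maximize $\theta^\varepsilon_{\rm MHS}$ over $X^\varepsilon_{\rm MHS}$); (B) if $\bar x$ satisfies the local sign-invariance condition below and $\bar x$ is a local maximizer of $(\mathrm{P}^\varepsilon_{\rm MHS})$, then $\bar x$ is a local maximizer of the M-HSCOP. Local sign-invariance condition: for all $i=0,1,\dots,I$, $\varphi_{ij}$ is nonpositive on a neighborhood of $\bar x$ for every $j\in\mathcal{J}^+_{i,0}(\bar x)$, and $\phi_{ij}$ is nonnegative on a neighborhood of $\bar x$ for every $j\in\mathcal{J}^-_{i,0}(\bar x)$.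
   Context: $\mathbf{1}_S$ is the indicator of $S\subseteq\mathbb{R}$. The M-HSCOP has objective $\theta_{\rm MHS}(x)=c(x)+\sum_{j=1}^{J_0}\psi_{0j}\mathbf{1}_{[0,\infty)}(\phi_{0j}(x))\mathbf{1}_{(0,\infty)}(\varphi_{0j}(x))$ and feasible set $X_{\rm MHS}=\{x\in P: A_{i\bullet}x+\sum_{j=1}^{J_i}\psi_{ij}\mathbf{1}_{[0,\infty)}(\phi_{ij}(x))\mathbf{1}_{(0,\infty)}(\varphi_{ij}(x))\ge\eta_i,\ i=1,\dots,I\}$. For $\varepsilon>0$, $(\mathrm{P}^\varepsilon_{\rm MHS})$ has objective $\theta^\varepsilon_{\rm MHS}(x)=c(x)+\sum_{j=1}^{J_0}\psi_{0j}^+\mathbf{1}_{[0,\infty)}(\phi_{0j}(x))\mathbf{1}_{[\varepsilon,\infty)}(\varphi_{0j}(x))-\sum_{j=1}^{J_0}\psi_{0j}^-\mathbf{1}_{(-\varepsilon,\infty)}(\phi_{0j}(x))\mathbf{1}_{(0,\infty)}(\varphi_{0j}(x))$ and feasible set $X^\varepsilon_{\rm MHS}=\{x\in P: A_{i\bullet}x+\sum_{j}\psi_{ij}^+\mathbf{1}_{[0,\infty)}(\phi_{ij}(x))\mathbf{1}_{[\varepsilon,\infty)}(\varphi_{ij}(x))-\sum_j\psi_{ij}^-\mathbf{1}_{(-\varepsilon,\infty)}(\phi_{ij}(x))\mathbf{1}_{(0,\infty)}(\varphi_{ij}(x))\ge\eta_i,\ i=1,\dots,I\}$. A local maximizer of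 $f$ on $X$ is $\bar x\in X$ with a neighborhood $\mathcal{N}$ such that $f(\bar x)\ge f(x)$ for all $x\in X\cap\mathcal{N}$. Index sets: $\mathcal{J}^+_{i,0}(\bar x)=\{j\in\{1,\dots,J_i\}:\psi_{ij}>0,\ \varphi_{ij}(\bar x)=0\}$ and $\mathcal{J}^-_{i,0}(\bar x)=\{j\in\{1,\dots,J_i\}:\psi_{ij}<0,\ \phi_{ij}(\bar x)=0\}$. *)

From HB Require Import structures.
From mathcomp Require Import all_boot all_order all_algebra.
From mathcomp Require Import all_classical all_reals all_analysis.
Set Implicit Arguments. Unset Strict Implicit. Unset Printing Implicit Defensive.
Import Order.TTheory GRing.Theory Num.Theory.
Import numFieldNormedType.Exports.
Local Open Scope classical_set_scope.
Local Open Scope ring_scope.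

Section Defs.
Variables (R : realType) (n : nat).

Definition ind (S : set R) (t : R) : R := if `[< S t >] then 1 else 0.

Definition pospart (a : R) : R := Num.max a 0.
Definition negpart (a : R) : R := Num.max (- a) 0.

Definition rowdot (I : nat) (A : 'M[R]_(I, n)) (i : 'I_I) (x : 'rV[R]_n) : R :=
  \sum_(k < n) A i k * x ord0 k.

(* Data of the problem: index i = 0 is the objective, index i = k.+1 is the
   constraint with row k of A (k : 'I_I). J i is J_i, sums run over j = 1..J_i. *)

Definition hs_term (J : nat -> nat) (psi : nat -> nat -> R)
  (phi varphi : nat -> nat -> 'rV[R]_n -> R) (i : nat) (x : 'rV[R]_n) : R :=
  \sum_(1 <= j < (J i).+1)
     psi i j * ind `[0, +oo[ (phi i j x) * ind `]0, +oo[ (varphi i j x).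

Definition hs_term_eps (eps : R) (J : nat -> nat) (psi : nat -> nat -> R)
  (phi varphi : nat -> nat -> 'rV[R]_n -> R) (i : nat) (x : 'rV[R]_n) : R :=
  \sum_(1 <= j < (J i).+1)
     pospart (psi i j) * ind `[0, +oo[ (phi i j x) * ind `[eps, +oo[ (varphi i j x)
  - \sum_(1 <= j < (J i).+1)
     negpart (psi i j) * ind `]- eps, +oo[ (phi i j x) * ind `]0, +oo[ (varphi i j x).

Definition theta_MHS (c : 'rV[R]_n -> R) J psi phi varphi (x : 'rV[R]_n) : R :=
  c x + hs_term J psi phi varphi 0 x.

Definition X_MHS (P : set 'rV[R]_n) (I : nat) (A : 'M[R]_(I, n)) (eta : 'I_I -> R)
  J psi phi varphi : set 'rV[R]_n :=
  [set x | P x /\ forall k : 'I_I,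
     rowdot A k x + hs_term J psi phi varphi k.+1 x >= eta k].

Definition theta_eps (eps : R) (c : 'rV[R]_n -> R) J psi phi varphi
  (x : 'rV[R]_n) : R :=
  c x + hs_term_eps eps J psi phi varphi 0 x.

Definition X_eps (eps : R) (P : set 'rV[R]_n) (I : nat) (A : 'M[R]_(I, n))
  (eta : 'I_I -> R) J psi phi varphi : set 'rV[R]_n :=
  [set x | P x /\ forall k : 'I_I,
     rowdot A k x + hs_term_eps eps J psi phi varphi k.+1 x >= eta k].

Definition local_max (f : 'rV[R]_n -> R) (X : set 'rV[R]_n) (xb : 'rV[R]_n) : Prop :=
  X xb /\ exists N, nbhs xb N /\ forall x, X x -> N x -> f x <= f xb.

Definition sign_invariance (I : nat) (J : nat -> nat) (psi : nat -> nat -> R)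
  (phi varphi : nat -> nat -> 'rV[R]_n -> R) (xb : 'rV[R]_n) : Prop :=
  forall i j, (i <= I)%N -> (1 <= j <= J i)%N ->
    (psi i j > 0 -> varphi i j xb = 0 -> \forall x \near xb, varphi i j x <= 0) /\
    (psi i j < 0 -> phi i j xb = 0 -> \forall x \near xb, phi i j x >= 0).

End Defs.

From HB Require Import structures.
From mathcomp Require Import all_boot all_order all_algebra.
From mathcomp Require Import all_classical all_reals all_analysis.
From mathcomp Require Import lra.

(* Every epsilon-summand is at most the corresponding Heaviside summand, since
   psi+ 1_[eps,oo) <= psi+ 1_(0,oo) and psi- 1_(-eps,oo) >= psi- 1_[0,oo); so the
   epsilon-problem has the smaller objective and the smaller feasible set.  The two
   summands differ only when varphi(x) lies in (0, eps) (for psi > 0) or phi(x) in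
   (-eps, 0) (for psi < 0).  At xb this is ruled out once eps is below half of every
   nonzero |varphi_ij(xb)|, |phi_ij(xb)|, which gives (A).  By continuity it is then
   ruled out near xb too, except for the indices where varphi_ij(xb) = 0 or
   phi_ij(xb) = 0, which is exactly what local sign invariance handles: the two
   problems coincide near xb, which gives (B). *)

Set Implicit Arguments.
Unset Strict Implicit.
Unset Printing Implicit Defensive.
Import Order.TTheory GRing.Theory Num.Theory.
Import numFieldNormedType.Exports.
Local Open Scope classical_set_scope.
Local Open Scope ring_scope.

Lemma filter_forall_ltn (T : Type) (F : set_system T) {FF : Filter F}
    (m : nat) (Q : nat -> T -> Prop) :
  (forall k, (k < m)%N -> \forall x \near F, Q k x) ->
  \forall x \near F, forall k, (k < m)%N -> Q k x.
Proof.
move=> FQ.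
apply: filterS (@filter_forall _ _ (fun k : 'I_m => Q k) F FF
  (fun k => FQ k (ltn_ord k))).
by move=> x Qx k km; exact: (Qx (Ordinal km)).
Qed.

Lemma near_right0_le (R : realFieldType) (Q : R -> Prop) :
  (\forall e \near 0^'+, Q e) ->
  exists2 eb : R, 0 < eb & forall e, 0 < e -> e <= eb -> Q e.
Proof.
rewrite near_withinE => /nbhs_ballP[d /= d_gt0 Qd].
exists (d / 2); first by rewrite divr_gt0.
move=> e e_gt0 e_le; apply: Qd => //=.
rewrite /ball /= sub0r normrN gtr0_norm //; lra.
Qed.

Lemma near_notin_0itv (R : realFieldType) (t : R) :
  \forall eps \near 0^'+, t \notin `]0, eps[.
Proof.
have [t_le0|t_gt0] := leP t 0.
  by apply: nearW => eps; rewrite in_itv /= ltNge t_le0.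
apply: filterS (nbhs_right_lt t_gt0) => eps eps_lt.
by rewrite in_itv /= negb_and -!leNgt (ltW eps_lt) orbT.
Qed.

Lemma near_notin_0itv_nbhs (R : realFieldType) (T : topologicalType)
    (f : T -> R) (x0 : T) :
  {for x0, continuous f} -> (f x0 = 0 -> \forall x \near x0, f x <= 0) ->
  \forall eps \near 0^'+, \forall x \near x0, f x \notin `]0, eps[.
Proof.
move=> f_cont f0_le; have [fx0_lt0|fx0_gt0|fx0_eq0] := ltrgtP (f x0) 0.
- apply: nearW => eps; apply: filterS (cvgr_lt _ f_cont _ fx0_lt0) => x fx_lt0.
  by rewrite in_itv /= ltNge (ltW fx_lt0).
- have half_gt0 : 0 < f x0 / 2 by rewrite divr_gt0.
  apply: filterS (nbhs_right_lt half_gt0) => eps eps_lt.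
  have half_lt : f x0 / 2 < f x0 by lra.
  apply: filterS (cvgr_gt _ f_cont _ half_lt) => x fx_gt.
  rewrite in_itv /= negb_and -!leNgt; apply/orP; right; lra.
- apply: nearW => eps; apply: filterS (f0_le fx0_eq0) => x fx_le0.
  by rewrite in_itv /= ltNge fx_le0.
Qed.

Section Parts_and_indicators.
Variable R : realType.

Lemma ge0_pospart (a : R) : 0 <= a -> pospart a = a.
Proof. by move=> a_ge0; rewrite /pospart max_l. Qed.

Lemma le0_pospart (a : R) : a <= 0 -> pospart a = 0.
Proof. by move=> a_le0; rewrite /pospart max_r. Qed.

Lemma ge0_negpart (a : R) : 0 <= a -> negpart a = 0.
Proof. by move=> a_ge0; rewrite /negpart max_r // oppr_le0. Qed.

Lemma le0_negpart (a : R) : a <= 0 -> negpart a = - a.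
Proof. by move=> a_le0; rewrite /negpart max_l // oppr_ge0. Qed.

Lemma ind_itv_ge (a t : R) : ind `[a, +oo[ t = if a <= t then 1 else 0.
Proof. by rewrite /ind /= in_itv /= andbT asboolb. Qed.

Lemma ind_itv_gt (a t : R) : ind `]a, +oo[ t = if a < t then 1 else 0.
Proof. by rewrite /ind /= in_itv /= andbT asboolb. Qed.

End Parts_and_indicators.

Section Heaviside_terms.
Variables (R : realType) (n : nat) (J : nat -> nat) (psi : nat -> nat -> R)
  (phi varphi : nat -> nat -> 'rV[R]_n -> R).

Definition hs_summand i j x :=
  psi i j * ind `[0, +oo[ (phi i j x) * ind `]0, +oo[ (varphi i j x).

Definition hs_summand_eps eps i j x :=
  pospart (psi i j) * ind `[0, +oo[ (phi i j x) * ind `[eps, +oo[ (varphi i j x)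
  - negpart (psi i j) * ind `]- eps, +oo[ (phi i j x) * ind `]0, +oo[ (varphi i j x).

Lemma hs_term_epsE eps i x : hs_term_eps eps J psi phi varphi i x =
  \sum_(1 <= j < (J i).+1) hs_summand_eps eps i j x.
Proof. by rewrite /hs_term_eps -sumrB. Qed.

Lemma hs_summand_eps_le eps i j x :
  0 < eps -> hs_summand_eps eps i j x <= hs_summand i j x.
Proof.
move=> eps_gt0; rewrite /hs_summand_eps /hs_summand !ind_itv_ge !ind_itv_gt.
have [psi_lt0|psi_gt0|->] := ltrgtP (psi i j) 0.
- rewrite le0_pospart ?le0_negpart ?(ltW psi_lt0) //.
  by repeat case: ifPn => ?; lra.
- rewrite ge0_pospart ?ge0_negpart ?(ltW psi_gt0) //.
  by repeat case: ifPn => ?; lra.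
- by rewrite ge0_pospart ?ge0_negpart // !mul0r subr0.
Qed.

Lemma hs_summand_epsE eps i j x : 0 < eps ->
  (0 < psi i j -> varphi i j x \notin `]0, eps[) ->
  (psi i j < 0 -> - phi i j x \notin `]0, eps[) ->
  hs_summand_eps eps i j x = hs_summand i j x.
Proof.
move=> eps_gt0; rewrite !in_itv /= !negb_and -!leNgt => varphi_gap phi_gap.
rewrite /hs_summand_eps /hs_summand !ind_itv_ge !ind_itv_gt.
have [psi_lt0|psi_gt0|->] := ltrgtP (psi i j) 0.
- rewrite le0_pospart ?le0_negpart ?(ltW psi_lt0) // !mul0r sub0r.
  have := phi_gap psi_lt0; rewrite oppr_le0 lerNr.
  by case/orP => ?; repeat case: ifPn => ?; lra.
- rewrite ge0_pospart ?ge0_negpart ?(ltW psi_gt0) // !mul0r subr0.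
  by have := varphi_gap psi_gt0; case/orP => ?; repeat case: ifPn => ?; lra.
- by rewrite ge0_pospart ?ge0_negpart // !mul0r subr0.
Qed.

Lemma near_hs_summand_eps_at i j x0 :
  \forall eps \near 0^'+, hs_summand_eps eps i j x0 = hs_summand i j x0.
Proof.
near=> eps; apply: hs_summand_epsE => [|_|_]; near: eps.
- exact: nbhs_right_gt.
- exact: near_notin_0itv.
- exact: near_notin_0itv.
Unshelve. all: by end_near. Qed.

Lemma near_hs_summand_eps_nbhs i j x0 :
  {for x0, continuous (phi i j)} -> {for x0, continuous (varphi i j)} ->
  (0 < psi i j -> varphi i j x0 = 0 -> \forall x \near x0, varphi i j x <= 0) ->
  (psi i j < 0 -> phi i j x0 = 0 -> \forall x \near x0, phi i j x >= 0) ->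
  \forall eps \near 0^'+, \forall x \near x0,
    hs_summand_eps eps i j x = hs_summand i j x.
Proof.
move=> phi_cont varphi_cont varphi_sign phi_sign.
have varphi_gap (psi_gt0 : 0 < psi i j) :=
  near_notin_0itv_nbhs varphi_cont (varphi_sign psi_gt0).
have phi_gap (psi_lt0 : psi i j < 0) :
    \forall eps \near 0^'+, \forall x \near x0, - phi i j x \notin `]0, eps[.
  apply: near_notin_0itv_nbhs; first exact: (cvgN phi_cont).
  move=> /eqP; rewrite oppr_eq0 => /eqP /(phi_sign psi_lt0).
  by apply: filterS => x; rewrite oppr_le0.
near=> eps.
have varphi_eps : 0 < psi i j -> \forall x \near x0, varphi i j x \notin `]0, eps[.
  by near: eps; exact: filter_imply.
have phi_eps : psi i j < 0 -> \forall x \near x0, - phi i j x \notin `]0, eps[.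
  by near: eps; exact: filter_imply.
have eps_gt0 : 0 < eps by near: eps; exact: nbhs_right_gt.
near=> x; apply: hs_summand_epsE => //; near: x; exact: filter_imply.
Unshelve. all: by end_near. Qed.

Definition hs_agree eps I x := forall i, (i < I.+1)%N ->
  hs_term_eps eps J psi phi varphi i x = hs_term J psi phi varphi i x.

Lemma near_hs_agree_at I x0 : \forall eps \near 0^'+, hs_agree eps I x0.
Proof.
have summand_eq i (iI : (i < I.+1)%N) j (jJ : (j < (J i).+1)%N) :=
  near_hs_summand_eps_at i j x0.
apply: filterS (filter_forall_ltn (fun i iI => filter_forall_ltn (summand_eq i iI))).
move=> eps eq_eps i iI; rewrite hs_term_epsE.
by apply: eq_big_nat => j /andP[_ jJ]; exact: eq_eps.
Qed.

Lemma near_hs_agree_nbhs I (x0 : 'rV[R]_n) :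
  (forall i j, {for x0, continuous (phi i j)}) ->
  (forall i j, {for x0, continuous (varphi i j)}) ->
  sign_invariance I J psi phi varphi x0 ->
  \forall eps \near 0^'+, \forall x \near x0, hs_agree eps I x.
Proof.
move=> phi_cont varphi_cont sign_inv.
have summand_eq i (iI : (i < I.+1)%N) j (jJ : (j < (J i).+1)%N) :
    \forall eps \near 0^'+, (0 < j)%N ->
      \forall x \near x0, hs_summand_eps eps i j x = hs_summand i j x.
  apply: filter_imply => j_gt0.
  have := sign_inv i j iI; rewrite j_gt0 => /(_ jJ)[varphi_sign phi_sign].
  exact: near_hs_summand_eps_nbhs.
apply: filterS (filter_forall_ltn (fun i iI => filter_forall_ltn (summand_eq i iI))).
move=> eps eq_eps; rewrite /hs_agree.
apply: (@filter_forall_ltn _ _ (nbhs_filter x0)) => i iI.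
apply: filterS (filter_forall_ltn (fun j jJ => filter_imply _ (eq_eps i iI j jJ))).
move=> x eq_x; rewrite hs_term_epsE.
by apply: eq_big_nat => j /andP[j_gt0 jJ]; exact: eq_x.
Qed.

Lemma near_hs_agree I (x0 : 'rV[R]_n) :
  (forall i j, {for x0, continuous (phi i j)}) ->
  (forall i j, {for x0, continuous (varphi i j)}) ->
  \forall eps \near 0^'+, hs_agree eps I x0 /\
    (sign_invariance I J psi phi varphi x0 -> \forall x \near x0, hs_agree eps I x).
Proof.
move=> phi_cont varphi_cont; near=> eps; split; near: eps.
- exact: near_hs_agree_at.
- by apply: filter_imply => sign_inv; exact: near_hs_agree_nbhs.
Unshelve. all: by end_near. Qed.

End Heaviside_terms.

Section Local_maximizers.
Variables (R : realType) (n : nat).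
Implicit Types (f g : 'rV[R]_n -> R) (X Y : set 'rV[R]_n).

Lemma local_max_subset f g X Y x0 :
  Y `<=` X -> (forall x, Y x -> g x <= f x) -> g x0 = f x0 -> Y x0 ->
  local_max f X x0 -> local_max g Y x0.
Proof.
move=> YX gf gf0 Yx0 [_ [N [Nx0 fmax]]]; split => //.
exists N; split => // x Yx Nx; rewrite gf0.
exact: le_trans (gf x Yx) (fmax x (YX x Yx) Nx).
Qed.

Lemma local_max_near_eq f g X Y x0 :
  (\forall x \near x0, X x -> Y x /\ f x = g x) -> X x0 ->
  local_max g Y x0 -> local_max f X x0.
Proof.
move=> near_eq Xx0 [_ [N [Nx0 gmax]]]; split => //.
have [_ fgx0] := nbhs_singleton near_eq Xx0.
exists (N `&` [set x | X x -> Y x /\ f x = g x]); split; first exact: filterI.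
move=> x Xx [Nx /(_ Xx)[Yx ->]]; rewrite fgx0; exact: gmax.
Qed.

End Local_maximizers.

Section Approximate_problem.
Variables (R : realType) (n I : nat) (P : set 'rV[R]_n) (c : 'rV[R]_n -> R)
  (A : 'M[R]_(I, n)) (eta : 'I_I -> R) (J : nat -> nat) (psi : nat -> nat -> R)
  (phi varphi : nat -> nat -> 'rV[R]_n -> R).

Lemma hs_term_eps_le eps i x : 0 < eps ->
  hs_term_eps eps J psi phi varphi i x <= hs_term J psi phi varphi i x.
Proof.
move=> eps_gt0; rewrite hs_term_epsE.
by apply: ler_sum => j _; exact: hs_summand_eps_le.
Qed.

Lemma theta_eps_le eps x : 0 < eps ->
  theta_eps eps c J psi phi varphi x <= theta_MHS c J psi phi varphi x.
Proof. by move=> eps_gt0; rewrite lerD2l hs_term_eps_le. Qed.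

Lemma X_eps_subset eps : 0 < eps ->
  X_eps eps P A eta J psi phi varphi `<=` X_MHS P A eta J psi phi varphi.
Proof.
move=> eps_gt0 x [Px cons_x]; split => // k.
by apply: le_trans (cons_x k) _; rewrite lerD2l hs_term_eps_le.
Qed.

Lemma theta_eps_agree eps x : hs_agree J psi phi varphi eps I x ->
  theta_eps eps c J psi phi varphi x = theta_MHS c J psi phi varphi x.
Proof. by move=> agree_x; rewrite /theta_eps agree_x. Qed.

Lemma X_eps_agree eps x : hs_agree J psi phi varphi eps I x ->
  X_MHS P A eta J psi phi varphi x -> X_eps eps P A eta J psi phi varphi x.
Proof. by move=> agree_x [Px cons_x]; split => // k; rewrite agree_x ?ltnS. Qed.

End Approximate_problem.

Theorem proposition8 (R : realType) (n I : nat) (P : set 'rV[R]_n)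
  (c : 'rV[R]_n -> R) (A : 'M[R]_(I, n)) (eta : 'I_I -> R)
  (J : nat -> nat) (psi : nat -> nat -> R)
  (phi varphi : nat -> nat -> 'rV[R]_n -> R) (xb : 'rV[R]_n) :
  closed P -> convex_set P ->
  (forall i j, continuous (phi i j)) -> (forall i j, continuous (varphi i j)) ->
  P xb ->
  exists epsb : R, 0 < epsb /\ forall eps : R, 0 < eps -> eps <= epsb ->
    (local_max (theta_MHS c J psi phi varphi) (X_MHS P A eta J psi phi varphi) xb ->
     local_max (theta_eps eps c J psi phi varphi) (X_eps eps P A eta J psi phi varphi) xb)
    /\
    (sign_invariance I J psi phi varphi xb ->
     local_max (theta_eps eps c J psi phi varphi) (X_eps eps P A eta J psi phi varphi) xb ->
     local_max (theta_MHS c J psi phi varphi) (X_MHS P A eta J psi phi varphi) xb).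
Proof.
move=> _ _ phi_cont varphi_cont _.
have [epsb epsb_gt0 near_agree] := near_right0_le
  (near_hs_agree J psi I (fun i j => phi_cont i j xb) (fun i j => varphi_cont i j xb)).
exists epsb; split => // eps eps_gt0 eps_le.
have [agree_xb agree_near] := near_agree eps eps_gt0 eps_le.
split=> [xb_max | sign_inv xb_max_eps].
- have [X_xb _] := xb_max; apply: local_max_subset xb_max.
  + exact: X_eps_subset.
  + by move=> x _; exact: theta_eps_le.
  + exact: theta_eps_agree agree_xb.
  + exact: X_eps_agree agree_xb X_xb.
- have [X_eps_xb _] := xb_max_eps.
  apply: local_max_near_eq xb_max_eps; last exact: X_eps_subset eps_gt0 _ X_eps_xb.
  apply: filterS (agree_near sign_inv) => x agree_x X_x.
  by rewrite (theta_eps_agree c agree_x); split; first exact: X_eps_agree agree_x X_x.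
Qed.
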